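(* Let $k\geq 1$ be an integer and let $m,n$ be integers with $m\geq n\geq 0$. Then \[C_{k,m}C_{k,n+1}-C_{k,n}C_{k,m+1}=-8(k-1)^{n+1}\,B_{k,m-n}.\]
   Context: For an integer $k\geq 1$, the generalized balancing numbers are defined by $B_{k,0}=0$, $B_{k,1}=1$ and $B_{k,n}=3kB_{k,n-1}+(1-k)B_{k,n-2}$ for $n\geq 2$; the generalized balancing-Lucas numbers are defined by $C_{k,0}=1$, $C_{k,1}=3$ and $C_{k,n}=3kC_{k,n-1}+(1-k)C_{k,n-2}$ for $n\geq 2$. *)

From mathcomp Require Import all_boot all_order all_algebra.
Set Implicit Arguments. Unset Strict Implicit. Unset Printing Implicit Defensive.
Import Order.TTheory GRing.Theory Num.Theory.
Local Open Scope ring_scope.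

Fixpoint genrec (k : int) (a b : int) (n : nat) : int :=
  match n with
  | 0%N => a
  | 1%N => b
  | (n'.+1 as m).+1 => 3 * k * genrec k a b m + (1 - k) * genrec k a b n'
  end.

Definition B (k : int) (n : nat) : int := genrec k 0 1 n.
Definition C (k : int) (n : nat) : int := genrec k 1 3 n.

(* The Casoratian [u a * u b.+1 - u b * u a.+1] of a solution of
   [u n.+2 = p * u n.+1 + q * u n] gets multiplied by [-q] when both indices
   are shifted, so for [C] (where [-q = k - 1]) the identity reduces to
   [n = 0], i.e. to [3 * C d - C d.+1 = -8 (k - 1) B d]; both sides of the
   latter solve the recurrence and agree for [d = 0, 1]. *)
From mathcomp Require Import all_boot all_order all_algebra.
From mathcomp Require Import ring.
Set Implicit Arguments. Unset Strict Implicit. Unset Printing Implicit Defensive.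
Import Order.TTheory GRing.Theory Num.Theory.
Local Open Scope ring_scope.

Section SecondOrderRecurrence.

Variables (R : comPzRingType) (p q : R).

Definition lin_rec2 (u : nat -> R) := forall n, u n.+2 = p * u n.+1 + q * u n.

Lemma lin_rec2_eq (u v : nat -> R) :
  lin_rec2 u -> lin_rec2 v -> u 0 = v 0 -> u 1 = v 1 -> u =1 v.
Proof.
move=> recu recv u0 u1 n.
suff [] : u n = v n /\ u n.+1 = v n.+1 by [].
elim: n => [|n [IHn IHn1]]; first by [].
by split; rewrite // recu recv IHn IHn1.
Qed.

Definition casorati (u : nat -> R) (a b : nat) := u a * u b.+1 - u b * u a.+1.

Lemma casoratiSS (u : nat -> R) (a b : nat) :
  lin_rec2 u -> casorati u a.+1 b.+1 = - q * casorati u a b.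
Proof. by move=> recu; rewrite /casorati !recu; ring. Qed.

Lemma casorati_addn (u : nat -> R) (n a b : nat) :
  lin_rec2 u -> casorati u (n + a) (n + b) = (- q) ^+ n * casorati u a b.
Proof.
move=> recu; elim: n => [|n IHn]; first by rewrite mul1r.
by rewrite !addSn casoratiSS // IHn exprS mulrA.
Qed.

End SecondOrderRecurrence.

Lemma genrec_lin_rec2 (k a b : int) : lin_rec2 (3 * k) (1 - k) (genrec k a b).
Proof. by []. Qed.

Lemma lucas_balancing (k : int) (d : nat) :
  3 * C k d - C k d.+1 = - 8 * (k - 1) * B k d.
Proof.
have recC := genrec_lin_rec2 k 1 3; have recB := genrec_lin_rec2 k 0 1.
apply: (lin_rec2_eq (p := 3 * k) (q := 1 - k)
  (u := fun j => 3 * C k j - C k j.+1)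
  (v := fun j => - 8 * (k - 1) * B k j)) => [j|j||] /=.
- by rewrite /C !recC; ring.
- by rewrite /B !recB; ring.
all: by rewrite /C /B /=; ring.
Qed.

Theorem mainTheorem6 (k : int) (m n : nat) :
  1 <= k -> (n <= m)%N ->
  C k m * C k n.+1 - C k n * C k m.+1 = - 8 * (k - 1) ^+ n.+1 * B k (m - n).
Proof.
move=> _ /subnK <-; rewrite addnK addnC; set d := (m - n)%N.
have := casorati_addn n d 0 (genrec_lin_rec2 k 1 3).
rewrite addn0 /casorati -!/(C k _) => ->.
have -> : C k 0 = 1 by [].
have -> : C k 1 = 3 by [].
by rewrite mul1r [C k d * 3]mulrC lucas_balancing opprB exprS; ring.
Qed.
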